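(* Let $(B,\lfloor\cdot,\cdot\rfloor)$ be an SSD space with quadratic form $q$ and let $A\subset B$ be $q$-positive. Then $\operatorname{conv}A\subset \operatorname{dom}\Phi_A^{@}\subset \operatorname{conv}^w A$.
   Context: An SSD space is a pair $(B,\lfloor\cdot,\cdot\rfloor)$ with $B$ a nonzero real vector space and $\lfloor\cdot,\cdot\rfloor$ a symmetric bilinear form; $q(b)=\frac12\lfloor b,b\rfloor$. $w(B,B)$ is the coarsest topology on $B$ making all maps $b\mapsto\lfloor b,c\rfloor$ continuous, and $\operatorname{conv}^w A$ is the $w(B,B)$-closure of the convex hull $\operatorname{conv}A$. A nonempty $A\subset B$ is $q$-positive if $q(b-c)\ge0$ for all $b,c\in A$. $\Phi_A(x)=\sup_{a\in A}\{\lfloor x,a\rfloor-q(a)\}$; $\Phi_A^{@}(b)=\sup_{c\in B}\{\lfloor c,b\rfloor-\Phi_A(c)\}$; $\operatorname{dom}g=\{x: g(x)<+\infty\}$. *)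

From HB Require Import structures.
From mathcomp Require Import all_boot all_order all_algebra.
From mathcomp Require Import all_classical all_reals all_analysis.
Set Implicit Arguments. Unset Strict Implicit. Unset Printing Implicit Defensive.
Import Order.TTheory GRing.Theory Num.Theory.
Import numFieldNormedType.Exports.
Local Open Scope classical_set_scope.
Local Open Scope ring_scope.

Section SSD.
Variables (R : realType) (B : lmodType R) (bf : B -> B -> R).

Definition symmetric_bilinear : Prop :=
  (forall b c, bf b c = bf c b) /\
  (forall a b1 b2 c, bf (a *: b1 + b2) c = a * bf b1 c + bf b2 c).

Definition qf (b : B) : R := bf b b / 2.

Definition q_positive (A : set B) : Prop :=
  A !=set0 /\ (forall b c, A b -> A c -> 0 <= qf (b - c)).

Definition conv_hull (A : set B) : set B :=
  [set x | exists (n : nat) (a : 'I_n -> B) (l : 'I_n -> R),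
      (forall i, A (a i)) /\ (forall i, 0 <= l i) /\
      \sum_(i < n) l i = 1 /\ x = \sum_(i < n) l i *: a i].

(* w(B,B): the coarsest topology making all maps b |-> [b,c] continuous,
   i.e. the topology generated by preimages of open sets of R. *)
Definition is_topology (tau : set (set B)) : Prop :=
  tau setT /\
  (forall U V, tau U -> tau V -> tau (U `&` V)) /\
  (forall (F : set (set B)), F `<=` tau -> tau (\bigcup_(U in F) U)).

Definition w_subbasis (U : set B) : Prop :=
  exists (c : B) (O : set R), @open R^o O /\ U = (fun b => bf b c) @^-1` O.

Definition w_open (U : set B) : Prop :=
  forall tau, is_topology tau -> w_subbasis `<=` tau -> tau U.

Definition w_closure (S : set B) : set B :=
  [set x | forall U, w_open U -> U x -> (S `&` U) !=set0].

Definition convw (A : set B) : set B := w_closure (conv_hull A).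

Local Open Scope ereal_scope.

Definition PhiA (A : set B) (x : B) : \bar R :=
  ereal_sup [set (bf x a - qf a)%:E | a in A].

Definition PhiA_at (A : set B) (b : B) : \bar R :=
  ereal_sup [set (bf c b)%:E - PhiA A c | c in [set: B]].

Definition edom (g : B -> \bar R) : set B := [set x | g x < +oo].

End SSD.

From HB Require Import structures.
From mathcomp Require Import all_boot all_order all_algebra.
From mathcomp Require Import all_classical all_reals all_analysis.
From mathcomp Require Import ring lra.
Import Order.TTheory GRing.Theory Num.Theory.
Import numFieldNormedType.Exports.
Set Implicit Arguments. Unset Strict Implicit. Unset Printing Implicit Defensive.
Local Open Scope classical_set_scope.
Local Open Scope ring_scope.

(** For [x = \sum_i l_i a_i] in [conv A], averaging the Fenchel-Young inequalities
    [bf c a_i <= PhiA c + q a_i] gives [bf c x - PhiA c <= \sum_i l_i q a_i] for every [c],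
    so [PhiA^@ x] is finite.

    Conversely, if [PhiA^@ b <= M], testing at [c = a0 + lam e] with [lam] large and using
    [q (a - a0) >= 0] shows that for every direction [e] and [eta > 0] some [a] in [A]
    satisfies [bf a e >= bf b e - eta]: no functional separates [b] from [A].  A basic
    [w(B,B)]-neighbourhood of [b] is cut out by finitely many [bf _ c_j]; in the image
    [R^m] of [x |-> (bf x c_j)_j], the point of the closure of the image of [conv A]
    nearest to the image of [b] must be that image itself, since otherwise the nearest-point
    inequality would give a separating functional. *)

Section Bilinear.
Variables (R : realType) (B : lmodType R) (bf : B -> B -> R).
Hypothesis hbf : symmetric_bilinear bf.

Lemma bfC x y : bf x y = bf y x.
Proof. exact: (proj1 hbf). Qed.

Lemma bfDl x y z : bf (x + y) z = bf x z + bf y z.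
Proof. by have := (proj2 hbf) 1 x y z; rewrite scale1r mul1r. Qed.

Lemma bf0l z : bf 0 z = 0.
Proof. by have /eqP := bfDl 0 0 z; rewrite addr0 -subr_eq subrr eq_sym => /eqP. Qed.

Lemma bfZl a x z : bf (a *: x) z = a * bf x z.
Proof. by have := (proj2 hbf) a x 0 z; rewrite addr0 bf0l addr0. Qed.

Lemma bfNl x z : bf (- x) z = - bf x z.
Proof. by rewrite -scaleN1r bfZl mulN1r. Qed.

Lemma bfBl x y z : bf (x - y) z = bf x z - bf y z.
Proof. by rewrite bfDl bfNl. Qed.

Lemma bfDr x y z : bf z (x + y) = bf z x + bf z y.
Proof. by rewrite !(bfC z) bfDl. Qed.

Lemma bfZr a x z : bf z (a *: x) = a * bf z x.
Proof. by rewrite !(bfC z) bfZl. Qed.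

Lemma bfBr x y z : bf z (x - y) = bf z x - bf z y.
Proof. by rewrite !(bfC z) bfBl. Qed.

Lemma bf_sumr n (l : 'I_n -> R) (a : 'I_n -> B) z :
  bf z (\sum_(i < n) l i *: a i) = \sum_(i < n) l i * bf z (a i).
Proof.
elim: n l a => [|n IH] l a; first by rewrite !big_ord0 bfC bf0l.
by rewrite !big_ord_recr /= bfDr IH bfZr.
Qed.

Lemma qfB x y : qf bf (x - y) = qf bf x - bf x y + qf bf y.
Proof. by rewrite /qf bfBl !bfBr (bfC y x); field. Qed.

End Bilinear.

Section ConjugateDomain.
Variables (R : realType) (B : lmodType R) (bf : B -> B -> R).
Hypothesis hbf : symmetric_bilinear bf.

Lemma conv_hull_self (A : set B) a : A a -> conv_hull A a.
Proof.
by move=> Aa; exists 1%N, (fun=> a), (fun=> 1); rewrite !big_ord1 scale1r.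
Qed.

Lemma bf_convex_comb_le n (a : 'I_n -> B) (l : 'I_n -> R) c (r : R) :
  (forall i, 0 <= l i) -> \sum_(i < n) l i = 1 ->
  (forall i, bf c (a i) - qf bf (a i) <= r) ->
  bf c (\sum_(i < n) l i *: a i) <= r + \sum_(i < n) l i * qf bf (a i).
Proof.
move=> l0 l1 le_r; rewrite (bf_sumr hbf).
apply: (@le_trans _ _ (\sum_(i < n) l i * (r + qf bf (a i)))).
  by apply: ler_sum => i _; apply: ler_wpM2l => //; rewrite -lerBlDr.
by under eq_bigr do rewrite mulrDr; rewrite big_split /= -mulr_suml l1 mul1r.
Qed.

Lemma PhiA_ge (A : set B) c a : A a -> ((bf c a - qf bf a)%:E <= PhiA bf A c)%E.
Proof. by move=> Aa; apply: ereal_sup_ubound; exists a. Qed.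

Lemma conv_hull_sub_dom_PhiA_at (A : set B) : conv_hull A `<=` edom (PhiA_at bf A).
Proof.
move=> _ [n [a [l [Aa [l0 [l1 ->]]]]]].
apply: (@le_lt_trans _ _ (\sum_(i < n) l i * qf bf (a i))%:E); last exact: ltry.
apply: ge_ereal_sup => _ [c _ <-].
have PhiA_ge_a i := PhiA_ge c (Aa i).
case E: (PhiA bf A c) => [r| |].
- rewrite -EFinD lee_fin lerBlDl; apply: bf_convex_comb_le => // i.
  by have := PhiA_ge_a i; rewrite E lee_fin.
- by rewrite /= leNye.
- case: n {Aa} a l l0 PhiA_ge_a l1 => [|n] a l _ PhiA_ge_a l1.
    by move: l1; rewrite big_ord0 => /eqP; rewrite eq_sym oner_eq0.
  by have := PhiA_ge_a ord0; rewrite E.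
Qed.

End ConjugateDomain.

Section Approximation.
Variables (R : realType) (B : lmodType R) (bf : B -> B -> R).
Hypothesis hbf : symmetric_bilinear bf.
Variable A : set B.

Lemma dom_PhiA_at_bound b : (PhiA_at bf A b < +oo)%E ->
  exists M : R, forall c, exists2 a, A a & bf c b - M < bf c a - qf bf a.
Proof.
move=> PhiA_at_lt.
have [M le_M] : exists M : R, (PhiA_at bf A b <= M%:E)%E.
  by case: (PhiA_at bf A b) PhiA_at_lt => [r _| //| _]; [exists r | exists 0]; rewrite ?leNye.
exists (M + 1) => c.
have : ((bf c b)%:E - PhiA bf A c <= M%:E)%E.
  by apply: le_trans le_M; apply: ereal_sup_ubound; exists c.
have gt_Phi : ((bf c b)%:E - PhiA bf A c <= M%:E ->
    (bf c b - (M + 1))%:E < PhiA bf A c)%E.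
  case: (PhiA bf A c) => [r| |] /=.
  - by rewrite -EFinD !lee_fin lte_fin => ?; lra.
  - by rewrite ltry.
  - by rewrite addey // leye_eq.
by move=> /gt_Phi /ereal_sup_gt [_ [a Aa <-]]; rewrite lte_fin; exists a.
Qed.

Lemma dom_PhiA_at_approx b : q_positive bf A -> (PhiA_at bf A b < +oo)%E ->
  forall e (eta : R), 0 < eta -> exists2 a, A a & bf b e - eta <= bf a e.
Proof.
move=> [[a0 Aa0] qpos] /dom_PhiA_at_bound [M ltM] e eta eta0.
pose K := qf bf a0 - bf a0 b + M.
pose lam := (`|K| + 1) / eta.
have lam0 : 0 < lam by rewrite divr_gt0 // ltr_wpDl.
have lam_eta : lam * eta = `|K| + 1 by rewrite mulfVK // gt_eqF.
have [a Aa lt_a] := ltM (a0 + lam *: e).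
exists a => //; rewrite lerBlDr -lerBlDl leNgt; apply/negP => lt_eta.
have := qpos a a0 Aa Aa0; rewrite (qfB hbf) (bfC hbf a a0).
move: lt_a; rewrite !(bfDl hbf) !(bfZl hbf) (bfC hbf a0 a) (bfC hbf e a) (bfC hbf e b).
have : lam * eta < lam * (bf b e - bf a e) by rewrite ltr_pM2l.
have := ler_norm K; rewrite /K; lra.
Qed.

End Approximation.

Section WeakTopology.
Variables (R : realType) (B : lmodType R) (bf : B -> B -> R).

Definition w_ball_open (U : set B) : Prop := forall x, U x ->
  exists (cs : seq B) (eps : R), 0 < eps /\
    [set y | forall c, c \in cs -> `|bf y c - bf x c| < eps] `<=` U.

Lemma w_ball_open_topology : is_topology w_ball_open.
Proof.
split; [|split].
- by move=> x _; exists [::], 1.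
- move=> U V oU oV x [Ux Vx].
  have [cs1 [e1 [e1_gt0 sub1]]] := oU x Ux.
  have [cs2 [e2 [e2_gt0 sub2]]] := oV x Vx.
  exists (cs1 ++ cs2), (Num.min e1 e2); split; first by rewrite lt_min e1_gt0 e2_gt0.
  move=> y near_y; split; [apply: sub1 | apply: sub2] => c cs_c;
    apply: lt_le_trans (near_y c _) _; rewrite ?mem_cat ?cs_c ?orbT //;
    by rewrite ge_min lexx ?orbT.
- move=> F sF x [U FU Ux].
  have [cs [e [e_gt0 sub]]] := sF U FU x Ux.
  by exists cs, e; split => // y /sub Uy; exists U.
Qed.

Lemma w_subbasis_ball_open : w_subbasis bf `<=` w_ball_open.
Proof.
move=> _ [c [V [oV ->]]] x /= Vx.
have /nbhs_ballP [e /= e_gt0 sub] : nbhs (bf x c : R^o) V by move: oV; rewrite openE; apply.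
exists [:: c], e; split => // y near_y /=; apply: sub.
by rewrite /ball /= distrC; apply: near_y; rewrite mem_seq1.
Qed.

Lemma w_open_ball_open U : w_open bf U -> w_ball_open U.
Proof. by apply; [exact: w_ball_open_topology | exact: w_subbasis_ball_open]. Qed.

End WeakTopology.

Section NearestPoint.
Variables (R : realType) (n : nat).
Implicit Types (p u v w y z : 'rV[R]_n) (K S : set 'rV[R]_n).

Definition dotv v w : R := \sum_(j < n) v ord0 j * w ord0 j.

Definition sqdist p y : R := \sum_(j < n) (y ord0 j - p ord0 j) ^+ 2.

Lemma sqdist_ge0 p y : 0 <= sqdist p y.
Proof. by apply: sumr_ge0 => j _; exact: sqr_ge0. Qed.

Lemma sqr_coord_le_sqdist p y j : (y ord0 j - p ord0 j) ^+ 2 <= sqdist p y.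
Proof. by rewrite /sqdist (bigD1 j) //= lerDl; apply: sumr_ge0 => i _; exact: sqr_ge0. Qed.

Lemma sqdist_eq0 p y : sqdist p y = 0 -> y = p.
Proof.
move=> /eqP; rewrite psumr_eq0 => [/allP y_p|j _]; last exact: sqr_ge0.
apply/rowP => j.
by apply/eqP; rewrite -subr_eq0 -sqrf_eq0; exact: y_p (mem_index_enum j).
Qed.

Lemma sqdist_continuous p : continuous (sqdist p).
Proof.
rewrite /sqdist; apply: continuous_big => [|j _]; first exact: add_continuous.
have coordB : continuous (fun y : 'rV[R]_n => y ord0 j - p ord0 j).
  by move=> y; exact: cvgB (@coord_continuous R 1 n ord0 j y) (cvg_cst _).
by move=> y; under eq_fun do rewrite expr2; exact: cvgM (coordB y) (coordB y).
Qed.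

Lemma norm_coord_le_sqdist p y j :
  `|y ord0 j| <= \sum_(i < n) `|p ord0 i| + sqdist p y + 1.
Proof.
have sq_le := sqr_coord_le_sqdist p y j.
have p_le : `|p ord0 j| <= \sum_(i < n) `|p ord0 i|.
  by rewrite (bigD1 j) //= lerDl; apply: sumr_ge0 => i _; exact: normr_ge0.
have y_le : `|y ord0 j| <= `|y ord0 j - p ord0 j| + `|p ord0 j|.
  by rewrite -[X in `|X|](subrK (p ord0 j)) ler_normD.
have d_le : `|y ord0 j - p ord0 j| <= (y ord0 j - p ord0 j) ^+ 2 + 1.
  by rewrite -real_normK ?num_real //; nra.
lra.
Qed.

Lemma closure_sqdist_min p K y0 : K y0 ->
  exists2 z, closure K z & forall y, closure K y -> sqdist p z <= sqdist p y.
Proof.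
move=> Ky0; pose r := sqdist p y0; pose M := \sum_(i < n) `|p ord0 i| + r + 1.
pose C := closure K `&` [set y | sqdist p y <= r].
have C_closed : closed C.
  apply: closedI; first exact: closed_closure.
  apply: (@preimage_closed _ _ (sqdist p) [set x : R | x <= r]).
    by move=> y _; exact: sqdist_continuous.
  exact: closed_le.
have C_box : C `<=` [set y | forall i, (`[- M, M]%classic : set R) (y ord0 i)].
  move=> y [_ /= le_r] i /=; rewrite in_itv /= -ler_norml.
  by apply: le_trans (norm_coord_le_sqdist p y i) _; rewrite !lerD2.
have C_compact : compact C.
  apply: subclosed_compact C_closed _ C_box.
  exact: (@rV_compact _ n (fun=> `[- M, M]%classic) (fun=> @segment_compact R (- M) M)).
have C0 : C !=set0 by exists y0; split; [exact: subset_closure | exact: lexx].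
have [z] := EVT_min_rV C0 C_compact (continuous_subspaceT (@sqdist_continuous p)).
rewrite inE => -[Kz le_z] z_min.
exists z => // y Ky; have [le_y|gt_y] := leP (sqdist p y) r.
- by apply: z_min; rewrite inE.
- exact: le_trans le_z (ltW gt_y).
Qed.

Lemma closure_segment K S :
  (forall u y t, K u -> S y -> 0 <= t <= 1 -> K ((1 - t) *: u + t *: y)) ->
  forall z y t, closure K z -> S y -> 0 <= t <= 1 ->
    closure K ((1 - t) *: z + t *: y).
Proof.
move=> K_segment z y t Kz Sy t01 N N_nbhs.
have seg_cont : continuous (fun u => (1 - t) *: u + t *: y).
  by move=> u; exact: (cvgD (cvgZ (cvg_cst (1 - t)) cvg_id) (cvg_cst (t *: y))).
have [u [Ku Nu]] := Kz _ (seg_cont z N N_nbhs).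
by exists ((1 - t) *: u + t *: y); split => //; exact: K_segment.
Qed.

Lemma sqdist_segment p z y t : sqdist p ((1 - t) *: z + t *: y) =
  sqdist p z + 2 * t * dotv (z - p) (y - z) + t ^+ 2 * sqdist z y.
Proof.
rewrite /sqdist /dotv !mulr_sumr -!big_split /=.
by apply: eq_bigr => j _; rewrite !mxE; ring.
Qed.

Lemma sqdist_min_segment p z y :
  (forall t, 0 < t <= 1 -> sqdist p z <= sqdist p ((1 - t) *: z + t *: y)) ->
  0 <= dotv (z - p) (y - z).
Proof.
move=> z_min; rewrite leNgt; apply/negP => d_lt0.
have W_ge0 := sqdist_ge0 z y.
pose t := Num.min 1 (- dotv (z - p) (y - z) / (sqdist z y + 1)).
have W1_gt0 : 0 < sqdist z y + 1 by lra.
have t_gt0 : 0 < t by rewrite lt_min ltr01 divr_gt0 // oppr_gt0.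
have t_le1 : t <= 1 by rewrite ge_min lexx.
have tW : t * (sqdist z y + 1) <= - dotv (z - p) (y - z).
  by rewrite -ler_pdivlMr // ge_min lexx orbT.
have := z_min t; rewrite t_gt0 t_le1 sqdist_segment => /(_ isT).
rewrite expr2; nra.
Qed.

Lemma closure_coord_near K p eps : closure K p -> 0 < eps ->
  exists2 y, K y & forall j, `|y ord0 j - p ord0 j| < eps.
Proof.
move=> Kp eps_gt0.
have near_p : nbhs p [set y | forall j, `|y ord0 j - p ord0 j| < eps].
  apply: (@filter_forall _ _ (fun j y => `|y ord0 j - p ord0 j| < eps) (nbhs p) _) => j.
  have /(_ (nbhsx_ballx _ _ eps_gt0)) near_j :=
    @coord_continuous R 1 n ord0 j p (ball (p ord0 j) eps).
  by apply: (@filterS _ (nbhs p) _ _ _ _ near_j) => y; rewrite /ball /= distrC.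
by have [y [Ky near_y]] := Kp _ near_p; exists y.
Qed.

Lemma rV_approx_of_not_separated K S p y0 : K y0 ->
  (forall u y t, K u -> S y -> 0 <= t <= 1 -> K ((1 - t) *: u + t *: y)) ->
  (forall v (eta : R), 0 < eta -> exists2 y, S y & dotv v p - eta <= dotv v y) ->
  forall eps, 0 < eps -> exists2 y, K y & forall j, `|y ord0 j - p ord0 j| < eps.
Proof.
move=> Ky0 K_segment not_sep eps eps_gt0.
have [z Kz z_min] := closure_sqdist_min p Ky0.
have [/sqdist_eq0 z_p|d_neq0] := eqVneq (sqdist p z) 0.
  by apply: closure_coord_near eps_gt0; rewrite -z_p.
have d_gt0 : 0 < sqdist p z by rewrite lt_def d_neq0 sqdist_ge0.
have [y Sy le_y] := not_sep (p - z) _ (divr_gt0 d_gt0 (ltr0Sn _ 1)).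
have : 0 <= dotv (z - p) (y - z).
  apply: sqdist_min_segment => t /andP[t_gt0 t_le1].
  by apply/z_min/(closure_segment K_segment) => //; rewrite (ltW t_gt0).
have -> : dotv (z - p) (y - z) = dotv (p - z) p - dotv (p - z) y - sqdist p z.
  by rewrite /dotv /sqdist -!sumrB; apply: eq_bigr => j _; rewrite !mxE; ring.
lra.
Qed.

End NearestPoint.

Section WeakClosure.
Variables (R : realType) (B : lmodType R) (bf : B -> B -> R).
Hypothesis hbf : symmetric_bilinear bf.

Lemma conv_hull_segment (A : set B) x a (t : R) :
  conv_hull A x -> A a -> 0 <= t <= 1 -> conv_hull A ((1 - t) *: x + t *: a).
Proof.
move=> [n [xs [l [A_xs [l_ge0 [l_sum1 ->]]]]]] Aa /andP[t_ge0 t_le1].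
pose xs' (k : 'I_n.+1) := if unlift ord_max k is Some i then xs i else a.
pose l' (k : 'I_n.+1) := if unlift ord_max k is Some i then (1 - t) * l i else t.
have unlift_widen (i : 'I_n) : unlift ord_max (widen_ord (leqnSn n) i) = Some i.
  have -> : widen_ord (leqnSn n) i = lift ord_max i.
    by apply/val_inj; rewrite /= /bump leqNgt ltn_ord.
  by rewrite liftK.
exists n.+1, xs', l'; split; [|split; [|split]].
- by move=> k; rewrite /xs'; case: (unlift _ _).
- move=> k; rewrite /l'; case: (unlift _ _) => [i|//].
  by apply: mulr_ge0 => //; rewrite subr_ge0.
- rewrite big_ord_recr /= /l' unlift_none.
  by under eq_bigr do rewrite unlift_widen; rewrite -mulr_sumr l_sum1 mulr1 subrK.
- rewrite big_ord_recr /= /l' /xs' unlift_none.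
  under [X in _ = X + _]eq_bigr do rewrite unlift_widen.
  by rewrite scaler_sumr; congr (_ + _); apply: eq_bigr => i _; rewrite scalerA.
Qed.

Lemma dotv_row m (v : 'rV[R]_m) (cs : 'I_m -> B) x :
  dotv v (\row_(j < m) bf x (cs j)) = bf x (\sum_(j < m) v ord0 j *: cs j).
Proof. by rewrite (bf_sumr hbf); apply: eq_bigr => j _; rewrite mxE. Qed.

Lemma dom_PhiA_at_sub_convw (A : set B) : q_positive bf A ->
  edom (PhiA_at bf A) `<=` convw bf A.
Proof.
move=> qposA b PhiA_at_b U oU Ub.
have [cs [eps [eps_gt0 sub_U]]] := w_open_ball_open oU Ub.
pose m := size cs.
pose T (x : B) : 'rV[R]_m := \row_(j < m) bf x (nth 0 cs j).
have [a0 Aa0] := qposA.1.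
have T_segment u y t : (T @` conv_hull A) u -> (T @` A) y -> 0 <= t <= 1 ->
    (T @` conv_hull A) ((1 - t) *: u + t *: y).
  move: u y => _ _ [x conv_x <-] [a Aa <-] t01.
  exists ((1 - t) *: x + t *: a); first exact: conv_hull_segment.
  by apply/rowP => j; rewrite !mxE (bfDl hbf) !(bfZl hbf).
have T_not_sep v (eta : R) : 0 < eta ->
    exists2 y, (T @` A) y & dotv v (T b) - eta <= dotv v y.
  move=> eta_gt0; rewrite !dotv_row.
  have [a Aa le_a] := dom_PhiA_at_approx hbf qposA PhiA_at_b
    (\sum_(j < m) v ord0 j *: nth 0 cs j) eta_gt0.
  by exists (T a); [exists a | rewrite dotv_row].
have T_a0 : (T @` conv_hull A) (T a0) by exists a0; first exact: conv_hull_self.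
have [_ [x conv_x <-] near_x] :=
  rV_approx_of_not_separated T_a0 T_segment T_not_sep eps_gt0.
exists x; split => //; apply: sub_U => c cs_c /=.
have := near_x (Ordinal (etrans (index_mem c cs) cs_c)).
by rewrite !mxE /= nth_index.
Qed.

End WeakClosure.

Theorem mainTheorem9 (R : realType) (B : lmodType R) (bf : B -> B -> R)
  (hbf : symmetric_bilinear bf) (hB : exists b : B, b != 0)
  (A : set B) (hA : q_positive bf A) :
  conv_hull A `<=` edom (PhiA_at bf A) /\ edom (PhiA_at bf A) `<=` convw bf A.
Proof.
split; [exact: conv_hull_sub_dom_PhiA_at | exact: dom_PhiA_at_sub_convw].
Qed.
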